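(* Let $t \geq 1$ and $k \geq 1$ be integers, and let $\mathcal{F}$ be a finite family of finite sets with $\alpha(\mathcal{F}) \geq t$ and $\beta(\mathcal{F},t) = \frac{l(\mathcal{F},t)}{|\mathcal{F}|}$. Let $\mathcal{A}_1, \dots, \mathcal{A}_k$ be cross-$t$-intersecting sub-families of $\mathcal{F}$ such that $\sum_{i=1}^k |\mathcal{A}_i|$ is maximum among all $k$-tuples of cross-$t$-intersecting sub-families of $\mathcal{F}$. Then \[\sum_{i=1}^k |\mathcal{A}_i| = \begin{cases} |\mathcal{F}| & \text{if } k \leq \frac{|\mathcal{F}|}{l(\mathcal{F},t)};\\ k\, l(\mathcal{F},t) & \text{if } k \geq \frac{|\mathcal{F}|}{l(\mathcal{F},t)}.\end{cases}\] Moreover, (i) if $k < \frac{|\mathcal{F}|}{l(\mathcal{F},t)}$, then $\mathcal{A}_i = \mathcal{A}_i^{t,-}$ for all $i \in [k]$, and $\mathcal{A}_1, \dots, \mathcal{A}_k$ partition $\mathcal{F}$; (ii) if $k > \frac{|\mathcal{F}|}{l(\mathcal{F},t)}$, then $\mathcal{A}_1 = \dots = \mathcal{A}_k = \mathcal{L}$ for some largest $t$-intersecting sub-family $\mathcal{L}$ of $\mathcal{F}$.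
   Context: All sets and families are finite. A family $\mathcal{A}$ is $t$-intersecting if $|A \cap B| \geq t$ for all $A, B \in \mathcal{A}$ with $A \neq B$. Families $\mathcal{A}_1, \dots, \mathcal{A}_k$ (not necessarily distinct or non-empty) are cross-$t$-intersecting if for all $i \neq j$, $|A \cap B| \geq t$ for every $A \in \mathcal{A}_i$, $B \in \mathcal{A}_j$. For non-empty $\mathcal{F}$: $\alpha(\mathcal{F}) = \max\{|F| : F \in \mathcal{F}\}$; $l(\mathcal{F},t)$ is the size of a largest $t$-intersecting sub-family of $\mathcal{F}$. For a family $\mathcal{A}$, $\mathcal{A}^{t,+} = \{A \in \mathcal{A} : |A \cap B| \geq t \text{ for all } B \in \mathcal{A}\setminus\{A\}\}$ and $\mathcal{A}^{t,-} = \mathcal{A} \setminus \mathcal{A}^{t,+}$. For $\mathcal{A} \subseteq \mathcal{F}$, $\beta(\mathcal{F},t,\mathcal{A}) = \frac{l(\mathcal{F},t) - |\mathcal{A}^{t,+}|}{|\mathcal{A}^{t,-}|}$ if $\mathcal{A}^{t,-} \neq \emptyset$, and $\frac{l(\mathcal{F},t)}{|\mathcal{F}|}$ otherwise; $\beta(\mathcal{F},t) = \min_{\mathcal{A} \subseteq \mathcal{F}} \beta(\mathcal{F},t,\mathcal{A})$. $[k] = \{1,\dots,k\}$. *)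

From HB Require Import structures.
From mathcomp Require Import all_boot all_order all_algebra.
Set Implicit Arguments. Unset Strict Implicit. Unset Printing Implicit Defensive.
Import Order.TTheory GRing.Theory Num.Theory.

Section Defs.
Variable T : finType.

Definition t_intersecting (t : nat) (FA : {set {set T}}) : Prop :=
  forall A B, A \in FA -> B \in FA -> A != B -> t <= #|A :&: B|.

Definition cross_t_intersecting (t k : nat) (As : 'I_k -> {set {set T}}) : Prop :=
  forall i j : 'I_k, i != j ->
    forall A B, A \in As i -> B \in As j -> t <= #|A :&: B|.

Definition alpha (F : {set {set T}}) : nat := \max_(X in F) #|X|.

Definition t_intersectingb (t : nat) (FA : {set {set T}}) : bool :=
  [forall A in FA, forall B in FA, (A != B) ==> (t <= #|A :&: B|)].

Definition lsize (F : {set {set T}}) (t : nat) : nat :=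
  \max_(G in powerset F | t_intersectingb t G) #|G|.

Definition Aplus (t : nat) (FA : {set {set T}}) : {set {set T}} :=
  [set A in FA | [forall B in FA :\ A, t <= #|A :&: B|]].

Definition Aminus (t : nat) (FA : {set {set T}}) : {set {set T}} :=
  FA :\: Aplus t FA.

Local Open Scope ring_scope.

Definition beta_at (F : {set {set T}}) (t : nat) (FA : {set {set T}}) : rat :=
  if Aminus t FA != set0 then
    ((lsize F t)%:R - #|Aplus t FA|%:R) / #|Aminus t FA|%:R
  else (lsize F t)%:R / #|F|%:R.

(* beta(F,t) = min over sub-families A of F of beta(F,t,A);
   the fold is seeded with the value at A = set0 (itself a candidate). *)
Definition beta (F : {set {set T}}) (t : nat) : rat :=
  \big[Num.min/beta_at F t set0]_(FA in powerset F) beta_at F t FA.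

End Defs.

(* Let U be the union of the A_i, p = |U^{t,+}| and m = |U^{t,-}|, and let
   S = sum_i |A_i|, n = |F|, l = l(F,t).  A set lying in two of the A_i meets
   every member of U in t points, so outside U^{t,+} the A_i are disjoint and
   S <= m + k p; also p <= l.  The hypothesis on beta, applied to U, gives
   l m <= (l - p) n when m > 0.  Together: l S <= (l - p) n + p (k l), i.e. S is
   at most a weighted mean of n and k l.  The tuples (F, {}, ..., {}) and
   (L, ..., L), for a largest t-intersecting L, show S >= n and S >= k l, so
   S = max(n, k l), and in the strict cases the weight of the smaller term
   vanishes: p = 0 when k l < n, and p = l (hence m = 0, so U = U^{t,+} is a
   largest t-intersecting family and every A_i = U) when n < k l. *)

From HB Require Import structures.
From mathcomp Require Import all_boot all_order all_algebra zify.
Import Order.TTheory GRing.Theory Num.Theory.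
Set Implicit Arguments. Unset Strict Implicit. Unset Printing Implicit Defensive.

Lemma weighted_sum_bound (S m p k l n : nat) :
  S <= m + k * p -> p <= l -> (0 < m -> l * m <= (l - p) * n) ->
  l * S <= (l - p) * n + p * (k * l).
Proof.
move=> leS le_pl beta_m; have lS : l * S <= l * m + p * (k * l) by nia.
by case: (posnP m) beta_m lS => [-> _ | _ /(_ isT)]; lia.
Qed.

Lemma convex_bound_eq_max (S l p a b : nat) : 0 < l -> p <= l ->
  a <= S -> b <= S -> l * S <= (l - p) * a + p * b -> S = maxn a b.
Proof.
move=> l_gt0 le_pl aS bS le_S; apply/eqP; rewrite eqn_leq geq_max aS bS !andbT.
rewrite -(leq_pmul2l l_gt0) (leq_trans le_S) // -{2}(subnK le_pl) mulnDl.
by rewrite leq_add // leq_mul2l ?leq_maxl ?leq_maxr orbT.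
Qed.

Lemma convex_bound_weight0 (l p a b : nat) : p <= l -> b < a ->
  l * a <= (l - p) * a + p * b -> p = 0.
Proof.
move=> le_pl ba; rewrite -{1}(subnK le_pl) mulnDl leq_add2l.
by case: p {le_pl} => // p; rewrite leq_pmul2l // leqNgt ba.
Qed.

Section NatRatio.
Variable R : numFieldType.
Local Open Scope ring_scope.

Lemma ler_nat_divn (a b c : nat) : (0 < c)%N ->
  (a%:R <= b%:R / c%:R :> R) = (a * c <= b)%N.
Proof. by move=> c_gt0; rewrite ler_pdivlMr ?ltr0n // -natrM ler_nat. Qed.

Lemma ler_divn_nat (a b c : nat) : (0 < c)%N ->
  (b%:R / c%:R <= a%:R :> R) = (b <= a * c)%N.
Proof. by move=> c_gt0; rewrite ler_pdivrMr ?ltr0n // -natrM ler_nat. Qed.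

End NatRatio.

Section Families.
Variable T : finType.
Implicit Types (F G FA : {set {set T}}) (X : {set T}).

Lemma t_intersectingP t G : reflect (t_intersecting t G) (t_intersectingb t G).
Proof.
apply: (iffP forallP) => [tG A B AG BG AB | tG A].
  by have /implyP/(_ AG)/forallP/(_ B)/implyP/(_ BG)/implyP := tG A; apply.
apply/implyP => AG; apply/forallP => B; apply/implyP => BG; apply/implyP.
exact: tG.
Qed.

Lemma t_intersecting1 t X : t_intersectingb t [set X].
Proof. by apply/t_intersectingP => A B /set1P-> /set1P->; rewrite eqxx. Qed.

Lemma AplusP t FA X :
  reflect (X \in FA /\ forall B, B \in FA -> B != X -> t <= #|X :&: B|)
          (X \in Aplus t FA).
Proof.
rewrite inE; apply: (iffP andP) => [[XFA /forallP tX] | [XFA tX]]; split => //.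
  by move=> B BFA BX; have /implyP := tX B; rewrite !inE BX BFA; apply.
by apply/forallP => B; apply/implyP => /setD1P[BX BFA]; apply: tX.
Qed.

Lemma Aplus_subset t FA : Aplus t FA \subset FA.
Proof. by apply/subsetP => X /AplusP[]. Qed.

Lemma t_intersecting_Aplus t FA : t_intersectingb t (Aplus t FA).
Proof.
apply/t_intersectingP => A B /AplusP[_ tA] /AplusP[BFA _] AB.
by apply: tA; rewrite // eq_sym.
Qed.

Lemma cards_Aplus_Aminus t FA : #|Aplus t FA| + #|Aminus t FA| = #|FA|.
Proof. by rewrite -(cardsID (Aplus t FA) FA) (setIidPr (Aplus_subset _ _)). Qed.

Lemma leq_lsize t F G : G \subset F -> t_intersectingb t G -> #|G| <= lsize F t.
Proof. by move=> GF tG; apply: leq_bigmax_cond; rewrite powersetE GF. Qed.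

Lemma lsize_gt0 t F X : X \in F -> 0 < lsize F t.
Proof.
by move=> XF; rewrite -(cards1 X) leq_lsize ?sub1set ?t_intersecting1.
Qed.

Lemma lsize_witness t F :
  exists2 L : {set {set T}}, L \subset F & t_intersectingb t L /\ #|L| = lsize F t.
Proof.
pose P := [pred G : {set {set T}} | (G \in powerset F) && t_intersectingb t G].
have P_gt0 : 0 < #|P|.
  apply/card_gt0P; exists set0; rewrite inE powersetE sub0set /=.
  by apply/t_intersectingP => A B; rewrite inE.
have [L] := eq_bigmax_cond (fun G => #|G|) P_gt0.
by rewrite inE powersetE => /andP[LF tL] cardL; exists L.
Qed.

Lemma exists_largest_t_meeting_family t F X0 : X0 \in F -> t <= #|X0| ->
  exists2 L : {set {set T}}, L \subset F &
    #|L| = lsize F t /\ {in L &, forall A B, t <= #|A :&: B|}.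
Proof.
move=> X0F tX0; have [l_le1 | l_gt1] := leqP (lsize F t) 1.
  exists [set X0]; first by rewrite sub1set.
  split; first by apply/eqP; rewrite cards1 eqn_leq (lsize_gt0 t X0F) l_le1.
  by move=> A B /set1P-> /set1P->; rewrite setIid.
have [L LF [/t_intersectingP tL cardL]] := lsize_witness t F.
exists L => //; split => // A B AL BL; have [<- | /tL] := eqVneq A B; last exact.
(* As [#|L| >= 2], [A] has a partner in [L], which it meets in [t] points. *)
have /card_gt0P[C /setD1P[CA CL]] : 0 < #|L :\ A|.
  by move: l_gt1; rewrite -cardL (cardsD1 A) AL.
rewrite setIid (leq_trans (tL A C AL CL _)) ?subset_leq_card ?subsetIl //.
by rewrite eq_sym.
Qed.

Lemma exists_t_large_member t F : 0 < t -> t <= alpha F ->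
  exists2 X, X \in F & t <= #|X|.
Proof.
move=> t_gt0 t_alpha; have F_gt0 : 0 < #|F|.
  rewrite card_gt0; apply: contraTneq t_alpha => ->.
  by rewrite /alpha big_set0 -ltnNge.
have [X XF cardX] := eq_bigmax_cond (fun X => #|X|) F_gt0.
by exists X; rewrite // -cardX.
Qed.

Lemma beta_le_beta_at t F FA : FA \subset F -> (beta F t <= beta_at F t FA)%R.
Proof. by move=> FAF; apply: bigmin_le_cond; rewrite powersetE. Qed.

Lemma card_Aminus_bound t F FA : FA \subset F ->
  beta F t = ((lsize F t)%:R / #|F|%:R)%R -> 0 < #|Aminus t FA| ->
  lsize F t * #|Aminus t FA| <= (lsize F t - #|Aplus t FA|) * #|F|.
Proof.
move=> FAF beta_eq m_gt0.
have p_le_l := leq_lsize (subset_trans (Aplus_subset t FA) FAF) (t_intersecting_Aplus t FA).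
have n_gt0 : 0 < #|F|.
  apply: leq_trans (subset_leq_card FAF); rewrite -(cards_Aplus_Aminus t).
  exact: leq_trans m_gt0 (leq_addl _ _).
have := beta_le_beta_at t FAF; rewrite beta_eq /beta_at -card_gt0 m_gt0.
rewrite ler_pdivrMr ?ltr0n // mulrAC ler_pdivlMr ?ltr0n //.
by rewrite -natrB // -!natrM ler_nat mulnC.
Qed.

End Families.

Lemma card_bigcup_disjoint (I T : finType) (A : I -> {set T}) :
  (forall i j, i != j -> [disjoint A i & A j]) ->
  #|\bigcup_i A i| = \sum_i #|A i|.
Proof.
move=> disjA; rewrite -sum1_card partition_disjoint_bigcup //.
by apply: eq_bigr => i _; rewrite sum1_card.
Qed.

Lemma eq_sets_of_sum_cards (I T : finType) (A : I -> {set T}) (B : {set T}) :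
  (forall i, A i \subset B) -> #|I| * #|B| <= \sum_i #|A i| ->
  forall i, A i = B.
Proof.
move=> AB; rewrite -sum_nat_const.
rewrite (geq_leqif (leqif_sum (fun i _ => subset_leqif_cards (AB i)))).
by move=> /forall_inP eqAB i; apply/eqP/eqAB.
Qed.

Section CrossIntersectingFamilies.
Variables (T : finType) (t k : nat) (As : 'I_k -> {set {set T}}).
Hypothesis cross : cross_t_intersecting t As.

Let U := \bigcup_(i < k) As i.

Lemma mem2_Aplus_bigcup i j X :
  i != j -> X \in As i -> X \in As j -> X \in Aplus t U.
Proof.
move=> ij Xi Xj; apply/AplusP; split; first by apply/bigcupP; exists i.
move=> B /bigcupP[h _ Bh] _; have [hi | hi] := eqVneq h i.
  by rewrite hi in Bh; apply: cross Xj Bh; rewrite eq_sym.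
by apply: cross Xi Bh; rewrite eq_sym.
Qed.

Lemma Aplus_subset_Aplus_bigcup i : Aplus t (As i) \subset Aplus t U.
Proof.
apply/subsetP => X /AplusP[Xi tX]; apply/AplusP.
split; first by apply/bigcupP; exists i.
move=> B /bigcupP[h _ Bh] BX; have [hi | hi] := eqVneq h i.
  by rewrite hi in Bh; apply: tX.
by apply: cross Xi Bh; rewrite eq_sym.
Qed.

(* Members outside [Aplus t U] lie in only one [As i]. *)
Lemma sum_cards_cross_le :
  \sum_(i < k) #|As i| <= #|Aminus t U| + k * #|Aplus t U|.
Proof.
rewrite -[k in k * _]card_ord -sum_nat_const.
rewrite (eq_bigr (fun i => #|As i :\: Aplus t U| + #|As i :&: Aplus t U|)); last first.
  by move=> i _; rewrite addnC cardsID.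
rewrite big_split leq_add //; last first.
  by apply: leq_sum => i _; rewrite subset_leq_card ?subsetIr.
rewrite -card_bigcup_disjoint; last first.
  move=> i j ij; rewrite -setI_eq0; apply/eqP/setP => X.
  rewrite in_setI !in_setD in_set0.
  by apply/negP => /andP[/andP[+ Xi] /andP[_ Xj]]; rewrite (mem2_Aplus_bigcup ij).
apply/subset_leq_card/bigcupsP => i _; apply: setSD; exact: bigcup_sup.
Qed.

End CrossIntersectingFamilies.

Section MaximumCrossIntersecting.
Variables (T : finType) (t k : nat) (F : {set {set T}}) (As : 'I_k -> {set {set T}}).
Hypotheses (t_gt0 : 0 < t) (k_gt0 : 0 < k) (t_le_alpha : t <= alpha F).
Hypothesis beta_eq : beta F t = ((lsize F t)%:R / #|F|%:R)%R.
Hypotheses (As_sub : forall i, As i \subset F) (cross : cross_t_intersecting t As).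
Hypothesis maxA : forall Bs : 'I_k -> {set {set T}},
  (forall i, Bs i \subset F) -> cross_t_intersecting t Bs ->
  \sum_(i < k) #|Bs i| <= \sum_(i < k) #|As i|.

Let U := \bigcup_(i < k) As i.
Let S := \sum_(i < k) #|As i|.
Let l := lsize F t.
Let p := #|Aplus t U|.

Let U_sub : U \subset F.
Proof. exact/bigcupsP. Qed.

Let card_le_max_sum : #|F| <= S.
Proof.
pose Bs i := if i == Ordinal k_gt0 then F else set0.
have -> : #|F| = \sum_(i < k) #|Bs i|.
  rewrite (bigD1 (Ordinal k_gt0)) //= /Bs eqxx big1 ?addn0 // => i /negbTE->.
  exact: cards0.
apply: maxA => [i | i j ij A B]; rewrite /Bs; first by case: ifP; rewrite ?sub0set.
case: ifP => [/eqP iE | _]; last by rewrite inE.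
case: ifP => [/eqP jE | _]; last by rewrite inE.
by rewrite iE jE eqxx in ij.
Qed.

Let lsize_le_max_sum : k * l <= S.
Proof.
have [X0 X0F tX0] := exists_t_large_member t_gt0 t_le_alpha.
have [L LF [cardL tL]] := exists_largest_t_meeting_family X0F tX0.
rewrite /l -cardL -[k in k * _]card_ord -sum_nat_const.
by apply: maxA => // i j _ A B AL BL; apply: tL.
Qed.

Let l_gt0 : 0 < l.
Proof.
by have [X0 X0F _] := exists_t_large_member t_gt0 t_le_alpha; apply: lsize_gt0 X0F.
Qed.

Let p_le_l : p <= l.
Proof. exact: leq_lsize (subset_trans (Aplus_subset _ _) U_sub) (t_intersecting_Aplus _ _). Qed.

Let convex_bound : l * S <= (l - p) * #|F| + p * (k * l).
Proof.
exact: weighted_sum_bound (sum_cards_cross_le cross) p_le_l (card_Aminus_bound U_sub beta_eq).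
Qed.

Lemma max_cross_sum_eq : S = maxn #|F| (k * l).
Proof. exact: convex_bound_eq_max l_gt0 p_le_l card_le_max_sum lsize_le_max_sum convex_bound. Qed.

Lemma max_cross_partition : k * l < #|F| ->
  [/\ forall i, As i = Aminus t (As i),
      forall i j, i != j -> As i :&: As j = set0 & U = F].
Proof.
move=> lt_kl_n; have S_n : S = #|F| by rewrite max_cross_sum_eq (maxn_idPl (ltnW lt_kl_n)).
have p0 : p = 0 by apply: convex_bound_weight0 p_le_l lt_kl_n _; rewrite -{1}S_n.
have Up0 : Aplus t U = set0 by apply/eqP; rewrite -cards_eq0; exact/eqP.
split=> [i | i j ij |].
- have /eqP Api0 : Aplus t (As i) == set0.
    by rewrite -subset0 -Up0 Aplus_subset_Aplus_bigcup.
  by rewrite /Aminus Api0 setD0.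
- apply/setP => X; rewrite in_setI in_set0; apply/negP => /andP[Xi Xj].
  by have := mem2_Aplus_bigcup cross ij Xi Xj; rewrite Up0 inE.
- apply/eqP; rewrite eqEcard U_sub -S_n -(cards_Aplus_Aminus t U) Up0 cards0 /=.
  by have := sum_cards_cross_le cross; rewrite -/p p0 muln0 addn0.
Qed.

Lemma max_cross_constant : #|F| < k * l ->
  exists L : {set {set T}},
    [/\ L \subset F, t_intersecting t L, #|L| = l & forall i, As i = L].
Proof.
move=> lt_n_kl; have S_kl : S = k * l by rewrite max_cross_sum_eq (maxn_idPr (ltnW lt_n_kl)).
have lp0 : l - p = 0.
  apply: convex_bound_weight0 (leq_subr _ _) lt_n_kl _.
  by rewrite subKn // addnC -{1}S_kl.
have m0 : #|Aminus t U| = 0.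
  have [// | m_gt0] := posnP #|Aminus t U|.
  have := card_Aminus_bound U_sub beta_eq m_gt0; rewrite -/l -/p lp0 leqn0.
  by rewrite muln_eq0 !eqn0Ngt l_gt0 m_gt0.
have UpU : Aplus t U = U.
  by apply/eqP; rewrite eqEcard Aplus_subset -(cards_Aplus_Aminus t U) m0 addn0 /=.
have cardU : #|U| = l by rewrite -UpU; apply/eqP; rewrite eqn_leq p_le_l -subn_eq0 lp0.
exists U; split=> //; first by rewrite -UpU; apply/t_intersectingP/t_intersecting_Aplus.
apply: eq_sets_of_sum_cards => [i|]; first exact: bigcup_sup.
by rewrite card_ord cardU -S_kl.
Qed.

End MaximumCrossIntersecting.

Unset Implicit Arguments.
Local Open Scope ring_scope.

Theorem theorem4p1 (T : finType) (t k : nat) (F : {set {set T}})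
  (As : 'I_k -> {set {set T}}) :
  (1 <= t)%N -> (1 <= k)%N ->
  (t <= alpha F)%N ->
  beta F t = (lsize F t)%:R / (#|F|)%:R :> rat ->
  (forall i, As i \subset F) ->
  cross_t_intersecting t As ->
  (forall Bs : 'I_k -> {set {set T}},
     (forall i, Bs i \subset F) -> cross_t_intersecting t Bs ->
     (\sum_(i < k) #|Bs i| <= \sum_(i < k) #|As i|)%N) ->
  ((k%:R <= (#|F|)%:R / (lsize F t)%:R :> rat) ->
     (\sum_(i < k) #|As i|)%N = #|F|) /\
  ((k%:R >= (#|F|)%:R / (lsize F t)%:R :> rat) ->
     (\sum_(i < k) #|As i|)%N = (k * lsize F t)%N) /\
  ((k%:R < (#|F|)%:R / (lsize F t)%:R :> rat) ->
     (forall i, As i = Aminus t (As i)) /\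
     (forall i j : 'I_k, i != j -> As i :&: As j = set0) /\
     \bigcup_(i < k) As i = F) /\
  ((k%:R > (#|F|)%:R / (lsize F t)%:R :> rat) ->
     exists L : {set {set T}},
       [/\ L \subset F, t_intersecting t L, #|L| = lsize F t &
           forall i, As i = L]).
Proof.
move=> t_gt0 k_gt0 t_le_alpha beta_eq As_sub cross maxA.
have l_gt0 : (0 < lsize F t)%N.
  by have [X XF _] := exists_t_large_member t_gt0 t_le_alpha; apply: lsize_gt0 XF.
have S_eq := max_cross_sum_eq t_gt0 k_gt0 t_le_alpha beta_eq As_sub cross maxA.
rewrite ltNge [_ < k%:R]ltNge ler_nat_divn // ler_divn_nat // -!ltnNge.
split; [|split; [|split]] => [le_kl_n | le_n_kl | lt_kl_n | lt_n_kl].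
- by rewrite S_eq; apply/maxn_idPl.
- by rewrite S_eq; apply/maxn_idPr.
- by have [] := max_cross_partition t_gt0 k_gt0 t_le_alpha beta_eq As_sub cross maxA lt_kl_n.
- exact: max_cross_constant t_gt0 k_gt0 t_le_alpha beta_eq As_sub cross maxA lt_n_kl.
Qed.
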